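(* Let $\mathcal{X}$ be a finite alphabet with $|\mathcal{X}|\ge 2$, let $w(i)>0$ for $i\in\mathcal{X}$ be arbitrary positive weights (not necessarily summing to $1$), and let $a>0$. Run the two-queue method with the exponential combining rule: the first queue initially contains all items of $\mathcal{X}$ arranged from head to tail in order of nondecreasing weight, and the second queue is initially empty. At each step, the two nodes of smallest weight are removed (each being at the head of one of the two queues), say with weights $w(j)$ and $w(k)$; they are made the two children of a new compound node of weight $a\,(w(j)+w(k))$, which is inserted at the tail of the second queue. This is repeated until a single node (the root) remains. Label the two edges from each internal node to its children with $0$ and $1$, and let $c(i)$ be the label sequence from the root to the leaf for item $i$, of length $n(i)$. Then the resulting code is optimal: its length vector $N=\{n(i)\}$ minimizes $L_a(W,N)$ over all binary prefix codes for $\mathcal{X}$.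
   Context: A binary prefix code for an alphabet $\mathcal{X}$ assigns to each $i\in\mathcal{X}$ a codeword $c(i)\in\{0,1\}^*$ such that no codeword is a prefix of another; $n(i)$ denotes the length of $c(i)$. For weights $W=\{w(i)\}$ and $a>0$, $a\neq 1$, the exponential penalty is $L_a(W,N)=\log_a \sum_{i\in\mathcal{X}} w(i)a^{n(i)}$ (for $a>1$ minimizing it means minimizing $\sum_i w(i)a^{n(i)}$, for $a<1$ it means maximizing that sum); for $a=1$ the penalty is taken to be $\sum_i w(i)n(i)$. *)

From HB Require Import structures.
From mathcomp Require Import all_boot all_order all_algebra.
From mathcomp Require Import all_classical all_reals all_analysis.
From Stdlib Require List.
Set Implicit Arguments. Unset Strict Implicit. Unset Printing Implicit Defensive.
Import Order.TTheory GRing.Theory Num.Theory.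
Local Open Scope ring_scope.

Inductive tree (m : nat) : Type :=
| Leaf of 'I_m
| Node of tree m & tree m.

Section Defs.
Variables (R : realType) (m : nat).

Fixpoint twt (a : R) (w : 'I_m -> R) (t : tree m) : R :=
  match t with
  | Leaf i => w i
  | Node l r => a * (twt a w l + twt a w r)
  end.

(* Label sequence from the root to leaf i (left edge = 0 = false,
   right edge = 1 = true), or None if i is not a leaf of t. *)
Fixpoint code_in (t : tree m) (i : 'I_m) : option (seq bool) :=
  match t with
  | Leaf j => if j == i then Some [::] else None
  | Node l r =>
      match code_in l i with
      | Some s => Some (false :: s)
      | None => omap (cons true) (code_in r i)
      end
  end.

Definition tree_code (t : tree m) (i : 'I_m) : seq bool := odflt [::] (code_in t i).

Definition prefix_code (c : 'I_m -> seq bool) : Prop :=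
  forall i j : 'I_m, i != j -> ~~ prefix (c i) (c j).

Definition La (a : R) (w : 'I_m -> R) (n : 'I_m -> nat) : R :=
  if a == 1 then \sum_i w i * (n i)%:R
  else ln (\sum_i w i * a ^+ n i) / ln a.

(* State of the two-queue method: (first queue, second queue), heads first. *)
Definition state := (seq (tree m) * seq (tree m))%type.

Definition pop_head (s s' : state) (x : tree m) : Prop :=
  (s.1 = x :: s'.1 /\ s.2 = s'.2) \/ (s.1 = s'.1 /\ s.2 = x :: s'.2).

Definition min_node (a : R) (w : 'I_m -> R) (s : state) (x : tree m) : Prop :=
  forall y, List.In y (s.1 ++ s.2) -> twt a w x <= twt a w y.

Definition tq_step (a : R) (w : 'I_m -> R) (s s'' : state) : Prop :=
  exists (x y : tree m) (s1 s2 : state),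
    [/\ pop_head s s1 x, min_node a w s x,
        pop_head s1 s2 y, min_node a w s1 y &
        s'' = (s2.1, rcons s2.2 (Node x y))].

Inductive tq_run (a : R) (w : 'I_m -> R) : state -> state -> Prop :=
| tq_refl s : tq_run a w s s
| tq_next s s' s'' : tq_step a w s s' -> tq_run a w s' s'' -> tq_run a w s s''.

(* Initial state: queue 1 = all items, head to tail by nondecreasing weight
   (the ordering s among ties is arbitrary), queue 2 empty. *)
Definition tq_init (s : seq 'I_m) : state := (map (@Leaf m) s, [::]).

Definition tq_result (a : R) (w : 'I_m -> R) (s : seq 'I_m) (t : tree m) : Prop :=
  exists fin : state, tq_run a w (tq_init s) fin /\ fin.1 ++ fin.2 = [:: t].

End Defs.

From HB Require Import structures.
From mathcomp Require Import all_boot all_order all_algebra.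
From mathcomp Require Import all_classical all_reals all_analysis.
From mathcomp Require Import zify ring lra.
Set Implicit Arguments. Unset Strict Implicit. Unset Printing Implicit Defensive.
Import Order.TTheory GRing.Theory Num.Theory.

(* Up to a monotone transformation, L_a(W, N) is the cost sum_i w(i) phi(n(i)),
   where phi(n) is n, a^n or -a^n according as a = 1, a > 1 or a < 1.  Then
   u phi(d+1) + v phi(d+1) = a (u + v) phi(d) + kap(u, v) with kap independent
   of d: two sibling leaves of weights u, v at depth d+1 cost as much as one leaf
   of weight a (u + v) at depth d, plus kap(u, v).
   Lengths of prefix codes satisfy Kraft's inequality.  Given any Kraft-admissible
   assignment of depths to the current weights, one may first shorten a deepest
   word without a sibling, then exchange depths so that the two smallest weights
   sit at the common maximal depth, all without increasing the cost; merging
   them yields an admissible assignment for the weights after one step of the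
   method, at a cost lower by kap(u, v).  Induction along the run bounds the cost
   of the final tree by that of any prefix code.  The second queue stays sorted
   because each compound node is formed from the two currently smallest nodes. *)

Lemma In_memE (T : eqType) (x : T) s : List.In x s <-> x \in s.
Proof.
elim: s => //= y s ->; rewrite inE.
by split=> [[->|->]|/orP[/eqP->|->]]; rewrite ?eqxx ?orbT; auto.
Qed.

Lemma sorted_rcons_last (T : Type) (e : rel T) s x y :
  sorted e (rcons s x) -> e x y -> sorted e (rcons (rcons s x) y).
Proof. by case: s => [|h s] /=; [move=> _ -> | rewrite !rcons_path last_rcons => -> ->]. Qed.

Lemma bigmax_mem (ns : seq nat) : ns != [::] -> \max_(n <- ns) n \in ns.
Proof.
elim: ns => // n [|k ns] IH _; first by rewrite big_seq1 inE.
rewrite big_cons inE; move: (IH isT); set M := \max_(_ <- _) _; clearbody M => M_in.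
by case: leqP; rewrite ?eqxx ?M_in ?orbT.
Qed.

Lemma perm_map_fst_cons (S T : eqType) (A : seq (S * T)) x l :
  perm_eq (map fst A) (x :: l) ->
  exists k C, perm_eq A ((x, k) :: C) /\ perm_eq (map fst C) l.
Proof.
move=> fst_A; have /mapP[p p_A x_p] : x \in map fst A by rewrite (perm_mem fst_A) inE eqxx.
exists p.2, (rem p A); rewrite x_p -surjective_pairing perm_to_rem //; split=> //.
by rewrite -(perm_cons x) -(permPr fst_A) x_p perm_sym (perm_map fst (perm_to_rem p_A)).
Qed.

(** * Kraft's inequality *)

Definition kraft_sum (L : nat) (ns : seq nat) : nat := \sum_(n <- ns) 2 ^ (L - n).

Definition kraft (ns : seq nat) : Prop :=
  exists2 L, all (fun n => n <= L) ns & kraft_sum L ns <= 2 ^ L.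

Lemma kraft_sum_cons L n ns : kraft_sum L (n :: ns) = 2 ^ (L - n) + kraft_sum L ns.
Proof. exact: big_cons. Qed.

Lemma kraft_sum_lift L M ns : all (fun n => n <= M) ns -> M <= L ->
  kraft_sum L ns = 2 ^ (L - M) * kraft_sum M ns.
Proof.
move=> /allP le_M le_ML; rewrite /kraft_sum big_distrr !big_seq /=.
by apply: eq_bigr => n /le_M le_nM; rewrite -expnD; congr (2 ^ _); lia.
Qed.

Lemma kraft_perm ns ns' : perm_eq ns ns' -> kraft ns -> kraft ns'.
Proof.
move=> eq_ns [L le_L kr]; exists L; first by rewrite -(perm_all _ eq_ns).
by rewrite /kraft_sum -(perm_big _ eq_ns).
Qed.

Lemma kraft_sum_le L ns : kraft ns -> all (fun n => n <= L) ns -> kraft_sum L ns <= 2 ^ L.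
Proof.
case=> L0 le_L0 kr le_L; set K := maxn L L0.
have K_L : 2 ^ K = 2 ^ (K - L) * 2 ^ L by rewrite -expnD subnK ?leq_maxl.
have K_L0 : 2 ^ K = 2 ^ (K - L0) * 2 ^ L0 by rewrite -expnD subnK ?leq_maxr.
rewrite -(@leq_pmul2l (2 ^ (K - L))) ?expn_gt0 // -K_L.
rewrite -kraft_sum_lift ?leq_maxl // (kraft_sum_lift le_L0) ?leq_maxr // K_L0.
by rewrite leq_pmul2l ?expn_gt0.
Qed.

Lemma kraft0 ns : kraft (0 :: ns) -> ns = [::].
Proof.
case=> L _; rewrite kraft_sum_cons subn0 -[X in _ <= X]addn0 leq_add2l leqn0.
by case: ns => // n ns; rewrite kraft_sum_cons addn_eq0 expn_eq0.
Qed.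

Lemma kraft_lower_deepest M ns : kraft (M.+1 :: ns) -> all (fun n => n <= M) ns ->
  kraft (M :: ns).
Proof.
move=> kr le_M; exists M; first by rewrite /= leqnn.
have le_M1 : all (fun n => n <= M.+1) (M.+1 :: ns).
  by rewrite /= leqnn; apply: sub_all le_M => n /leqW.
(* at depth M.+1 the Kraft sum 1 + 2 * kraft_sum M ns is odd, hence < 2 ^ M.+1 *)
have := kraft_sum_le kr le_M1; rewrite !kraft_sum_cons (kraft_sum_lift le_M (leqnSn M)).
by rewrite !subnn subSn // subnn expn0 expn1 expnS; lia.
Qed.

Lemma kraft_merge_deepest M ns : kraft [:: M.+1, M.+1 & ns] ->
  all (fun n => n <= M.+1) ns -> kraft (M :: ns).
Proof.
move=> kr le_M; exists M.+1; first by rewrite /= leqnSn.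
have le_M1 : all (fun n => n <= M.+1) [:: M.+1, M.+1 & ns] by rewrite /= leqnn le_M.
have := kraft_sum_le kr le_M1.
by rewrite !kraft_sum_cons !subnn subSn // subnn expn1 expn0 addnA.
Qed.

Definition prefix_free (cs : seq (seq bool)) : bool :=
  pairwise (fun u v => ~~ prefix u v && ~~ prefix v u) cs.

Lemma prefix_free_nil cs : [::] \in cs -> prefix_free cs -> cs = [:: [::]].
Proof.
case: cs => // u cs; rewrite inE /prefix_free pairwise_cons.
case/orP=> [/eqP <-|nil_cs] /andP[/allP pf_u _].
  by case: cs pf_u => // v cs /(_ v); rewrite inE eqxx prefix0s => /(_ isT).
by have := pf_u _ nil_cs; rewrite prefix0s andbF.
Qed.

Lemma prefix_free_behead b cs : [::] \notin cs -> prefix_free cs ->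
  prefix_free [seq behead u | u <- cs & head false u == b].
Proof.
move=> nil_cs pf_cs; rewrite /prefix_free pairwise_map.
apply: (sub_in_pairwise (P := [pred u | (u \in cs) && (head false u == b)])
  (r := fun u v => ~~ prefix u v && ~~ prefix v u)).
- move=> u v /andP[u_cs /eqP hu] /andP[v_cs /eqP hv].
  case: u u_cs hu => [|x u] u_cs; first by rewrite u_cs in nil_cs.
  case: v v_cs hv => [|y v] v_cs; first by rewrite v_cs in nil_cs.
  by move=> /= <- <-; rewrite eqxx.
- by apply/allP => u; rewrite mem_filter andbC.
- exact: pairwise_filter.
Qed.

Lemma kraft_prefix_free L cs : all (fun u => size u <= L) cs -> prefix_free cs ->
  \sum_(u <- cs) 2 ^ (L - size u) <= 2 ^ L.
Proof.
elim: L cs => [|L IHL] cs size_cs pf_cs;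
  have [/prefix_free_nil->//|nil_cs] := boolP ([::] \in cs); try by rewrite big_seq1.
- case: cs size_cs nil_cs {pf_cs} => [|u cs]; first by rewrite big_nil.
  by rewrite /= leqn0 size_eq0 inE => /andP[/eqP-> _]; rewrite eqxx.
- have half b : \sum_(u <- cs | head false u == b) 2 ^ (L.+1 - size u) <= 2 ^ L.
    rewrite -big_filter (eq_big_seq (fun u => 2 ^ (L - size (behead u)))); last first.
      by move=> -[|x u]; rewrite mem_filter => /andP[_ u_cs] //; rewrite u_cs in nil_cs.
    rewrite -(big_map behead xpredT (fun u => 2 ^ (L - size u))).
    apply: IHL; last exact: prefix_free_behead.
    rewrite all_map all_filter; apply/allP => -[|x u] u_cs /=; first by rewrite implybT.
    by apply/implyP => _; rewrite -ltnS; exact: (allP size_cs _ u_cs).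
  rewrite (bigID (fun u => head false u == true)) expnS mul2n -addnn.
  apply: leq_add; last rewrite (eq_bigl (fun u => head false u == false)).
  + exact: half.
  + exact: half.
  + by move=> u; case: (head false u).
Qed.

Lemma kraft_prefix_code m (c : 'I_m -> seq bool) (s : seq 'I_m) :
  uniq s -> prefix_code c -> kraft [seq size (c i) | i <- s].
Proof.
move=> uniq_s c_prefix; set L := \max_(i <- s) size (c i).
have le_L : all (fun i => size (c i) <= L) s.
  by apply/allP => i i_s; apply: leq_bigmax_seq.
exists L; first by rewrite all_map.
rewrite /kraft_sum big_map -(big_map c xpredT (fun u => 2 ^ (L - size u))).
apply: kraft_prefix_free; first by rewrite all_map.
rewrite /prefix_free pairwise_map; move: uniq_s; rewrite uniq_pairwise.
by apply: sub_pairwise => i j /= ne_ij; rewrite !c_prefix // eq_sym.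
Qed.

(** * Depth assignments *)

(* A depth assignment is a list of (weight, depth) pairs; it is an assignment
   for a multiset of weights W when its first components form a permutation of W. *)
Section DepthAssignments.
Local Open Scope ring_scope.
Variables (R : realFieldType) (a : R) (phi : nat -> R) (kap : R -> R -> R).
Hypothesis phi_homo : {homo phi : n k / (n <= k)%N >-> n <= k}.
Hypothesis phi_merge :
  forall u v d, u * phi d.+1 + v * phi d.+1 = a * (u + v) * phi d + kap u v.

Definition cost (A : seq (R * nat)) : R := \sum_(p <- A) p.1 * phi p.2.

Lemma cost_cons p A : cost (p :: A) = p.1 * phi p.2 + cost A.
Proof. exact: big_cons. Qed.

Lemma cost_perm A B : perm_eq A B -> cost A = cost B.
Proof. exact: perm_big. Qed.

Lemma cost_swap v u k M : v <= u -> (k <= M)%N ->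
  v * phi M + u * phi k <= v * phi k + u * phi M.
Proof.
move=> le_vu le_kM.
have : 0 <= (u - v) * (phi M - phi k) by rewrite mulr_ge0 // subr_ge0 // phi_homo.
by rewrite mulrBl !mulrBr; lra.
Qed.

Lemma cost_lower_deepest A : all (fun x => 0 <= x) (map fst A) -> (1 < size A)%N ->
  kraft (map snd A) -> (count_mem (\max_(n <- map snd A) n) (map snd A) <= 1)%N ->
  exists A1, [/\ perm_eq (map fst A1) (map fst A), kraft (map snd A1),
    cost A1 <= cost A & (sumn (map snd A1) < sumn (map snd A))%N].
Proof.
move=> ge0_A size_A kr; set M := \max_(_ <- _) _ => once.
have /mapP[p p_A M_p] : M \in map snd A.
  by apply: bigmax_mem; rewrite -size_eq0 size_map -lt0n ltnW.
have A_p := perm_to_rem p_A; set C := rem p A in A_p.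
have snd_A : perm_eq (map snd A) (M :: map snd C) by rewrite M_p (perm_map snd A_p).
have M_C : M \notin map snd C.
  move: once; rewrite (permP snd_A) /= eqxx add1n ltnS leqn0 => /eqP no_M.
  by rewrite -has_pred1 has_count no_M.
have lt_M : all (fun n => n < M)%N (map snd C).
  apply/allP => n n_C; rewrite ltn_neqAle leq_bigmax_seq ?andbT //; last first.
    by rewrite (perm_mem snd_A) inE n_C orbT.
  by apply: contraNneq M_C => <-.
clearbody M; case: M => [|M] in M_p snd_A lt_M {M_C once}.
  have /kraft0 snd_C := kraft_perm snd_A kr.
  by move: size_A; rewrite -(size_map snd) (perm_size snd_A) snd_C.
exists ((p.1, M) :: C); split.
- by rewrite perm_sym (perm_map fst A_p).
- apply: (kraft_lower_deepest (kraft_perm snd_A kr)).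
  by apply: sub_all lt_M => n; rewrite ltnS.
- rewrite (cost_perm A_p) !cost_cons -M_p lerD2r; apply: ler_wpM2l; last exact: phi_homo.
  exact: (allP ge0_A _ (map_f fst p_A)).
- by rewrite (perm_sumn snd_A) /= ltn_add2r.
Qed.

Lemma cost_deepest_twice A : all (fun x => 0 <= x) (map fst A) -> (1 < size A)%N ->
  kraft (map snd A) ->
  exists A1, [/\ perm_eq (map fst A1) (map fst A), kraft (map snd A1),
    cost A1 <= cost A &
    exists2 M, all (fun n => n <= M)%N (map snd A1) & (1 < count_mem M (map snd A1))%N].
Proof.
have [k] := ubnP (sumn (map snd A)); elim: k A => // k IHk A lt_k ge0_A size_A kr.
have [twice|once] := ltnP 1 (count_mem (\max_(n <- map snd A) n) (map snd A)).
  exists A; split=> //; exists (\max_(n <- map snd A) n) => //.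
  by apply/allP => n n_A; apply: leq_bigmax_seq.
have [A1 [fst_A1 kr1 cost_A1 lt_A1]] := cost_lower_deepest ge0_A size_A kr once.
have ge0_A1 : all (fun x => 0 <= x) (map fst A1) by rewrite (perm_all _ fst_A1).
have size_A1 : (1 < size A1)%N by rewrite -(size_map fst) (perm_size fst_A1) size_map.
have [A2 [fst_A2 kr2 cost_A2 twice]] := IHk A1 (leq_trans lt_A1 lt_k) ge0_A1 size_A1 kr1.
exists A2; split=> //; first by rewrite (permPl fst_A2).
exact: le_trans cost_A2 cost_A1.
Qed.

Lemma cost_exchange v rest A M : perm_eq (map fst A) (v :: rest) ->
  all (fun u => v <= u) rest -> M \in map snd A -> all (fun n => n <= M)%N (map snd A) ->
  exists D, [/\ perm_eq (map fst D) rest, perm_eq (M :: map snd D) (map snd A) &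
    v * phi M + cost D <= cost A].
Proof.
move=> fst_A le_v M_A le_M; have [k [C [A_C fst_C]]] := perm_map_fst_cons fst_A.
have snd_A : perm_eq (map snd A) (k :: map snd C) := perm_map snd A_C.
rewrite (cost_perm A_C) cost_cons.
have [<-|ne_kM] := eqVneq k M; first by exists C; split; rewrite // perm_sym.
have /mapP[q q_C M_q] : M \in map snd C.
  by move: M_A; rewrite (perm_mem snd_A) inE eq_sym (negPf ne_kM).
have C_q := perm_to_rem q_C.
exists ((q.1, k) :: rem q C); split.
- by rewrite -(permPr fst_C) (permPr (perm_map fst C_q)).
- rewrite (permPr snd_A) /= (perm_catCA [:: M] [:: k]) /= perm_cons.
  by rewrite (permPr (perm_map snd C_q)) /= -M_q.
- rewrite (cost_perm C_q) !cost_cons /= -M_q !addrA lerD2r.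
  apply: cost_swap; last by apply: (allP le_M); rewrite (perm_mem snd_A) inE eqxx.
  by apply: (allP le_v); rewrite -(perm_mem fst_C) (perm_mem (perm_map fst C_q)) inE eqxx.
Qed.

Lemma cost_merge x y rest A : 0 <= x -> x <= y -> all (fun u => y <= u) rest ->
  perm_eq (map fst A) (x :: y :: rest) -> kraft (map snd A) ->
  exists A', [/\ perm_eq (map fst A') (a * (x + y) :: rest), kraft (map snd A') &
    cost A' + kap x y <= cost A].
Proof.
move=> ge0_x le_xy le_y fst_A kr.
have le_x : all (fun u => x <= u) (y :: rest).
  by rewrite /= le_xy; apply: sub_all le_y => u; apply: le_trans.
have ge0_A : all (fun u => 0 <= u) (map fst A).
  by rewrite (perm_all _ fst_A) /= ge0_x; apply: sub_all le_x => u; apply: le_trans.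
have size_A : (1 < size A)%N by rewrite -(size_map fst) (perm_size fst_A).
have [A1 [fst_A1 kr1 cost_A1 [M le_M twice]]] := cost_deepest_twice ge0_A size_A kr.
have M_A1 : M \in map snd A1 by rewrite -has_pred1 has_count ltnW.
have [D [fst_D snd_D cost_D]] := cost_exchange (perm_trans fst_A1 fst_A) le_x M_A1 le_M.
rewrite -(permP snd_D) /= eqxx add1n ltnS in twice.
rewrite -(perm_all _ snd_D) /= leqnn /= in le_M.
have M_D : M \in map snd D by rewrite -has_pred1 has_count.
have [E [fst_E snd_E cost_E]] := cost_exchange fst_D le_y M_D le_M.
have kr_E : kraft [:: M, M & map snd E].
  by apply: kraft_perm kr1; rewrite perm_sym -(permPr snd_D) perm_cons.
have le_ME : all (fun n => n <= M)%N (map snd E).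
  by move: le_M; rewrite -(perm_all _ snd_E) => /andP[].
have cost_xyE : x * phi M + (y * phi M + cost E) <= cost A.
  by apply: le_trans cost_A1; apply: le_trans cost_D; rewrite lerD2l.
have M_gt0 : (0 < M)%N by move: kr_E; case: (M) => // /kraft0.
rewrite -(prednK M_gt0) in kr_E le_ME cost_xyE.
exists ((a * (x + y), M.-1) :: E); split.
- by rewrite /= perm_cons.
- exact: kraft_merge_deepest kr_E le_ME.
- by rewrite cost_cons /= addrAC -phi_merge -addrA.
Qed.

End DepthAssignments.

(** * Code trees *)

Fixpoint tree_eqb m (t u : tree m) : bool :=
  match t, u with
  | Leaf i, Leaf j => i == j
  | Node l r, Node l' r' => tree_eqb l l' && tree_eqb r r'
  | _, _ => false
  end.

Lemma tree_eqP m : Equality.axiom (@tree_eqb m).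
Proof.
elim=> [i|l IHl r IHr] [j|l' r'] /=; try by constructor.
  by apply: (iffP eqP) => [->|[]].
by apply: (iffP andP) => [[/IHl-> /IHr->]|[<- <-]] //; split; [apply/IHl|apply/IHr].
Qed.

HB.instance Definition _ m := hasDecEq.Build (tree m) (@tree_eqP m).

Section TreeCodes.
Variable m : nat.

Fixpoint leaves (t : tree m) : seq 'I_m :=
  match t with Leaf i => [:: i] | Node l r => leaves l ++ leaves r end.

Lemma code_in_leaves t i : isSome (code_in t i) = (i \in leaves t).
Proof.
elim: t => [j|l IHl r IHr] /=; first by rewrite inE eq_sym; case: eqP.
by rewrite mem_cat -IHl -IHr; case: (code_in l i); case: (code_in r i).
Qed.

Lemma tree_code_left l r i : i \in leaves l ->
  tree_code (Node l r) i = false :: tree_code l i.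
Proof. by rewrite -code_in_leaves /tree_code /=; case: (code_in l i). Qed.

Lemma tree_code_right l r i : i \notin leaves l -> i \in leaves r ->
  tree_code (Node l r) i = true :: tree_code r i.
Proof.
rewrite -!code_in_leaves /tree_code /=.
by case: (code_in l i) => // _; case: (code_in r i).
Qed.

Lemma tree_code_prefix t : uniq (leaves t) ->
  {in leaves t &, forall i j, i != j -> ~~ prefix (tree_code t i) (tree_code t j)}.
Proof.
elim: t => [k|l IHl r IHr] /=.
  by move=> _ i j; rewrite !inE => /eqP-> /eqP->; rewrite eqxx.
rewrite cat_uniq => /and3P[uniq_l /hasPn lr uniq_r] i j.
have right_r k : k \in leaves r -> tree_code (Node l r) k = true :: tree_code r k.
  by move=> k_r; rewrite tree_code_right // lr.
rewrite !mem_cat => /orP[i_l|i_r] /orP[j_l|j_r] ne_ij.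
- by rewrite !tree_code_left //=; apply: IHl.
- by rewrite tree_code_left // right_r.
- by rewrite right_r // tree_code_left.
- by rewrite !right_r //=; apply: IHr.
Qed.

Lemma tree_prefix_code t : perm_eq (leaves t) (enum 'I_m) -> prefix_code (tree_code t).
Proof.
move=> leaves_t i j; apply: tree_code_prefix; rewrite ?(perm_mem leaves_t) ?mem_enum //.
by rewrite (perm_uniq leaves_t) enum_uniq.
Qed.

End TreeCodes.

Section TreeCost.
Local Open Scope ring_scope.
Variables (R : realType) (m : nat) (a : R) (w : 'I_m -> R).
Variables (phi : nat -> R) (kap : R -> R -> R).
Hypothesis phi_merge :
  forall u v d, u * phi d.+1 + v * phi d.+1 = a * (u + v) * phi d + kap u v.

Local Notation tw := (twt a w).

Fixpoint merge_cost (t : tree m) : R :=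
  match t with
  | Leaf _ => 0
  | Node l r => merge_cost l + merge_cost r + kap (tw l) (tw r)
  end.

Lemma tree_cost t d : uniq (leaves t) ->
  \sum_(i <- leaves t) w i * phi (d + size (tree_code t i)) = tw t * phi d + merge_cost t.
Proof.
elim: t d => [j|l IHl r IHr] d /=.
  by rewrite big_seq1 /tree_code /= eqxx addn0 addr0.
rewrite cat_uniq => /and3P[uniq_l /hasPn lr uniq_r]; rewrite big_cat /=.
rewrite (eq_big_seq (fun i => w i * phi (d.+1 + size (tree_code l i)))); last first.
  by move=> i i_l; rewrite tree_code_left //= addnS.
rewrite [X in _ + X](eq_big_seq (fun i => w i * phi (d.+1 + size (tree_code r i)))).
  by rewrite IHl // IHr // addrACA phi_merge; ring.
by move=> i i_r; rewrite tree_code_right ?lr //= addnS.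
Qed.

End TreeCost.

(** * The two-queue method *)

Section TwoQueues.
Local Open Scope ring_scope.
Variables (R : realType) (m : nat) (a : R) (w : 'I_m -> R).
Hypothesis w_gt0 : forall i, 0 < w i.
Hypothesis a_gt0 : 0 < a.

Local Notation tw := (twt a w).

Definition nodes (s : state m) : seq (tree m) := s.1 ++ s.2.

Lemma twt_gt0 t : 0 < tw t.
Proof.
by elim: t => [i|l + r +] /=; [exact: w_gt0 | move=> *; rewrite mulr_gt0 ?addr_gt0].
Qed.

Lemma pop_head_perm s s1 x : pop_head s s1 x -> perm_eq (nodes s) (x :: nodes s1).
Proof. by rewrite /nodes; case=> -[-> ->] //; rewrite -(perm_catCA [:: x]). Qed.

Lemma min_nodeP s x : min_node a w s x <-> all (fun u => tw x <= tw u) (nodes s).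
Proof.
split=> [min_x|/allP min_x y /In_memE]; last exact: min_x.
by apply/allP => y /In_memE; apply: min_x.
Qed.

Lemma tq_step_perm s s' : tq_step a w s s' ->
  exists x y rest, [/\ perm_eq (nodes s) [:: x, y & rest],
    perm_eq (nodes s') (Node x y :: rest),
    all (fun u => tw x <= tw u) (y :: rest) & all (fun u => tw y <= tw u) rest].
Proof.
case=> x [y [s1 [s2 [pop_x min_x pop_y min_y ->]]]].
have s_s1 := pop_head_perm pop_x; have s1_s2 := pop_head_perm pop_y.
have s_s2 : perm_eq (nodes s) [:: x, y & nodes s2] by rewrite (permPl s_s1) perm_cons.
exists x, y, (nodes s2); split=> //.
- by rewrite /nodes /= -cats1 catA cats1 perm_rcons.
- by move/min_nodeP: min_x; rewrite (perm_all _ s_s2) => /andP[].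
- by move/min_nodeP: min_y; rewrite (perm_all _ s1_s2) => /andP[].
Qed.

Lemma tq_run_leaves s fin : tq_run a w s fin ->
  perm_eq (flatten (map (@leaves m) (nodes fin))) (flatten (map (@leaves m) (nodes s))).
Proof.
elim=> // s0 s1 s2 step _ /permPl ->.
have [x [y [rest [s0_xy s1_xy _ _]]]] := tq_step_perm step.
rewrite (permPl (perm_flatten (perm_map _ s1_xy))).
by rewrite (permPr (perm_flatten (perm_map _ s0_xy))) /= catA.
Qed.

Lemma tq_result_leaves (s : seq 'I_m) t : tq_result a w s t -> perm_eq (leaves t) s.
Proof.
case=> fin [run fin_t]; have := tq_run_leaves run.
by rewrite /nodes fin_t /= !cats0 -map_comp flatten_seq1.
Qed.

Definition le_twt : rel (tree m) := fun u v => tw u <= tw v.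

Lemma le_twt_trans : transitive le_twt.
Proof. by move=> ? ? ?; apply: le_trans. Qed.

(* The last node z of queue 2 was built from two nodes that were minimal when it
   was formed, so no later merge of the remaining nodes can be lighter than z:
   this is what keeps queue 2 sorted. *)
Definition tq_inv (s : state m) : Prop :=
  [/\ sorted le_twt s.1, sorted le_twt s.2 &
      forall q z, s.2 = rcons q z ->
        {in s.1 ++ q &, forall u v, tw z <= a * (tw u + tw v)}].

Lemma tq_init_inv (s : seq 'I_m) : sorted [rel i j | w i <= w j] s -> tq_inv (tq_init s).
Proof. by split=> //=; [rewrite sorted_map | case]. Qed.

Lemma tq_pop_min s : sorted le_twt s.1 -> sorted le_twt s.2 -> nodes s != [::] ->
  exists x s1, [/\ pop_head s s1 x, min_node a w s x,
    sorted le_twt s1.1 & sorted le_twt s1.2].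
Proof.
have head_min h t : sorted le_twt (h :: t) -> all (le_twt h) (h :: t).
  by move=> /= path_t; rewrite /le_twt lexx (order_path_min le_twt_trans).
case: s => -[|h1 t1] [|h2 t2] //= sorted1 sorted2 _.
- exists h2, ([::], t2); split=> //=; [by right | | exact: path_sorted sorted2].
  exact/min_nodeP/head_min.
- exists h1, (t1, [::]); split=> //=; [by left | | exact: path_sorted sorted1].
  by apply/min_nodeP; rewrite /nodes cats0; exact: head_min.
have [le12|lt21] := leP (tw h1) (tw h2).
- exists h1, (t1, h2 :: t2); split=> //=; [by left | | exact: path_sorted sorted1].
  apply/min_nodeP; rewrite /nodes all_cat head_min //=.
  by apply: sub_all (head_min _ _ sorted2) => u /(le_trans le12).
- exists h2, (h1 :: t1, t2); split=> //=; [by right | | exact: path_sorted sorted2].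
  apply/min_nodeP; rewrite /nodes all_cat (head_min _ _ sorted2) andbT.
  by apply: sub_all (head_min _ _ sorted1) => u /(le_trans (ltW lt21)).
Qed.

Lemma pop_head_rcons (s s1 : state m) x q z : pop_head s s1 x -> s1.2 = rcons q z ->
  exists q0, [/\ s.2 = rcons q0 z, x \in s.1 ++ q0 & {subset s1.1 ++ q <= s.1 ++ q0}].
Proof.
case=> -[-> ->] s1_qz.
  by exists q; split=> //; [rewrite inE eqxx | move=> u; rewrite inE => ->; rewrite orbT].
exists (x :: q); rewrite s1_qz; split=> //; first by rewrite mem_cat mem_head orbT.
by move=> u; rewrite !mem_cat inE => /orP[->|->]; rewrite ?orbT.
Qed.

Lemma tq_step_inv s : tq_inv s -> (1 < size (nodes s))%N ->
  exists s', tq_step a w s s' /\ tq_inv s'.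
Proof.
case=> sorted1 sorted2 last2 size_s.
have [|x [s1 [pop_x min_x sorted11 sorted12]]] := tq_pop_min sorted1 sorted2.
  by rewrite -size_eq0 -lt0n ltnW.
have s_s1 := pop_head_perm pop_x.
have [|y [s2 [pop_y min_y sorted21 sorted22]]] := tq_pop_min sorted11 sorted12.
  by move: size_s; rewrite (perm_size s_s1) /= ltnS -size_eq0 -lt0n.
have s1_s2 := pop_head_perm pop_y.
have s2_s u : u \in nodes s2 -> u \in nodes s.
  by move=> u_s2; rewrite (perm_mem s_s1) inE (perm_mem s1_s2) inE u_s2 !orbT.
have s2_s1 u : u \in nodes s2 -> u \in nodes s1.
  by rewrite (perm_mem s1_s2) inE => ->; rewrite orbT.
exists (s2.1, rcons s2.2 (Node x y)); split; first by exists x, y, s1, s2.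
split=> //=.
  case/lastP E2: s2.2 sorted22 => [|q z] // sorted_qz.
  apply: sorted_rcons_last sorted_qz _.
  have [q1 [E1 y_q1 _]] := pop_head_rcons pop_y E2.
  have [q0 [E0 x_q0 sub0]] := pop_head_rcons pop_x E1.
  exact: last2 E0 _ _ x_q0 (sub0 _ y_q1).
move=> q z /rcons_inj[<- <-] u v u_s2 v_s2 /=.
rewrite ler_pM2l //; apply: lerD.
  by move/min_nodeP/allP: min_x; apply; apply: s2_s.
by move/min_nodeP/allP: min_y; apply; apply: s2_s1.
Qed.

Lemma tq_run_exists s : tq_inv s -> nodes s != [::] ->
  exists t fin, tq_run a w s fin /\ nodes fin = [:: t].
Proof.
have [n] := ubnP (size (nodes s)); elim: n s => // n IHn s lt_n inv_s nonempty.
have [two|one] := ltnP 1 (size (nodes s)); last first.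
  case E: (nodes s) one nonempty => [|t [|]] // _ _.
  by exists t, s; split=> //; apply: tq_refl.
have [s' [step inv_s']] := tq_step_inv inv_s two.
have [x [y [rest [s_xy s'_xy _ _]]]] := tq_step_perm step.
have size_s' : size (nodes s') = (size (nodes s)).-1.
  by rewrite (perm_size s_xy) (perm_size s'_xy).
have lt_s' : (size (nodes s') < n)%N by rewrite size_s'; lia.
have nonempty' : nodes s' != [::] by rewrite -size_eq0 size_s'; lia.
have [t [fin [run fin_t]]] := IHn s' lt_s' inv_s' nonempty'.
by exists t, fin; split=> //; apply: tq_next step run.
Qed.

Section Optimality.
Variables (phi : nat -> R) (kap : R -> R -> R).
Hypothesis phi_homo : {homo phi : n k / (n <= k)%N >-> n <= k}.
Hypothesis phi_merge :
  forall u v d, u * phi d.+1 + v * phi d.+1 = a * (u + v) * phi d + kap u v.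

Lemma tq_run_cost s fin t : tq_run a w s fin -> nodes fin = [:: t] ->
  forall A, perm_eq (map fst A) (map tw (nodes s)) -> kraft (map snd A) ->
  tw t * phi 0 + merge_cost a w kap t <=
    cost phi A + \sum_(u <- nodes s) merge_cost a w kap u.
Proof.
elim=> [s0|s0 s1 s2 step _ IH] fin_t A fst_A kr.
  rewrite fin_t big_seq1 in fst_A *; rewrite lerD2r.
  case: A fst_A {kr} => [|[x k] [|? ?]] fst_A; try by have := perm_size fst_A.
  have /eqP -> : x == tw t by rewrite -mem_seq1 -(perm_mem fst_A) mem_head.
  by rewrite /cost big_seq1 /= ler_pM2l ?twt_gt0 //; apply: phi_homo.
have [x [y [rest [s0_xy s1_xy /= /andP[le_xy le_x] le_y]]]] := tq_step_perm step.
have ge0_x : 0 <= tw x by exact/ltW/twt_gt0.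
rewrite -all_map in le_y; rewrite (permPr (perm_map tw s0_xy)) in fst_A.
have [A' [fst_A' kr' cost_A']] := cost_merge phi_homo phi_merge ge0_x le_xy le_y fst_A kr.
have := IH fin_t A' _ kr'; rewrite (permPr (perm_map tw s1_xy)) => /(_ fst_A').
rewrite (perm_big _ s0_xy) (perm_big _ s1_xy) !big_cons /=.
by move: cost_A'; set S := \sum_(_ <- _) _; lra.
Qed.

Lemma tq_result_cost s t c : perm_eq s (enum 'I_m) -> tq_result a w s t ->
  prefix_code c -> \sum_i w i * phi (size (tree_code t i)) <= \sum_i w i * phi (size (c i)).
Proof.
move=> s_enum res c_prefix; have [fin [run fin_t]] := res.
have leaves_t := perm_trans (tq_result_leaves res) s_enum.
pose A := [seq (w i, size (c i)) | i <- s].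
have fst_A : perm_eq (map fst A) (map tw (nodes (tq_init s))).
  by rewrite /nodes /= cats0 -!map_comp.
have kr_A : kraft (map snd A).
  by rewrite -map_comp; apply: kraft_prefix_code; rewrite ?(perm_uniq s_enum) ?enum_uniq.
have := tq_run_cost run fin_t fst_A kr_A.
rewrite /nodes /= cats0 big_map big1 // addr0.
rewrite -(tree_cost w phi_merge 0) ?(perm_uniq leaves_t) ?enum_uniq //.
by rewrite /cost big_map (perm_big _ leaves_t) (perm_big _ s_enum) !big_enum.
Qed.

End Optimality.
End TwoQueues.

(** * The exponential penalty *)

Section ExponentialPenalty.
Local Open Scope ring_scope.
Variables (R : realType) (a : R).

(* Negated for a < 1, where log_a is decreasing. *)
Definition depth_penalty (n : nat) : R :=
  if a == 1 then n%:R else if 1 < a then a ^+ n else - a ^+ n.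

Definition merge_surplus (u v : R) : R := if a == 1 then u + v else 0.

Lemma depth_penalty_homo : 0 < a -> {homo depth_penalty : n k / (n <= k)%N >-> n <= k}.
Proof.
move=> a_gt0 n k le_nk; rewrite /depth_penalty; case: eqP => _; first by rewrite ler_nat.
case: ltP => [a_gt1|a_le1]; last rewrite lerN2.
- by have := ler_weXn2l (ltW a_gt1) le_nk.
- by have := ler_wiXn2l (ltW a_gt0) a_le1 le_nk.
Qed.

Lemma depth_penalty_merge u v d :
  u * depth_penalty d.+1 + v * depth_penalty d.+1 =
    a * (u + v) * depth_penalty d + merge_surplus u v.
Proof.
rewrite /depth_penalty /merge_surplus; case: eqP => [->|_].
  by rewrite -addn1 natrD; ring.
by case: ifP => _; rewrite exprS; ring.
Qed.

Lemma La_le_penalty m (w : 'I_m -> R) (n n' : 'I_m -> nat) :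
  (0 < m)%N -> (forall i, 0 < w i) -> 0 < a ->
  \sum_i w i * depth_penalty (n i) <= \sum_i w i * depth_penalty (n' i) ->
  La a w n <= La a w n'.
Proof.
move=> m_gt0 w_gt0 a_gt0; rewrite /La /depth_penalty.
have sum_gt0 (k : 'I_m -> nat) : 0 < \sum_i w i * a ^+ k i.
  rewrite (bigD1 (Ordinal m_gt0)) //= ltr_pwDl ?mulr_gt0 ?exprn_gt0 //.
  by rewrite sumr_ge0 // => i _; rewrite mulr_ge0 ?exprn_ge0 // ltW.
case: eqP => // a_ne1; case: ltP => [a_gt1|a_le1] le_sum.
  by rewrite ler_pM2r ?invr_gt0 ?ln_gt0 // ler_ln ?posrE.
have a_lt1 : a < 1 by rewrite lt_neqAle a_le1 andbT; apply/eqP.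
rewrite ler_nM2r ?invr_lt0 ?ln_lt0 ?a_gt0 // ler_ln ?posrE //.
by move: le_sum; rewrite !(eq_bigr _ (fun i _ => mulrN _ _)) !sumrN lerN2.
Qed.

End ExponentialPenalty.

Local Open Scope ring_scope.

Theorem lemma1 (R : realType) (m : nat) (w : 'I_m -> R) (a : R) :
  (2 <= m)%N -> (forall i, 0 < w i) -> 0 < a ->
  forall s : seq 'I_m,
    perm_eq s (enum 'I_m) -> sorted [rel i j | w i <= w j] s ->
    (exists t : tree m, tq_result a w s t) /\
    (forall t : tree m, tq_result a w s t ->
       prefix_code (tree_code t) /\
       forall c : 'I_m -> seq bool, prefix_code c ->
         La a w (fun i => size (tree_code t i)) <= La a w (fun i => size (c i))).
Proof.
move=> m_ge2 w_gt0 a_gt0 s s_enum s_sorted; split.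
  have nodes_s : nodes (tq_init s) != [::].
    by rewrite -size_eq0 /nodes /= cats0 size_map (perm_size s_enum) size_enum_ord; lia.
  have [t [fin [run fin_t]]] := tq_run_exists a_gt0 (tq_init_inv a s_sorted) nodes_s.
  by exists t, fin.
move=> t res; split.
  by apply: tree_prefix_code; apply: perm_trans (tq_result_leaves res) s_enum.
move=> c c_prefix; apply: La_le_penalty => //; first lia.
by have := tq_result_cost w_gt0 a_gt0 (depth_penalty_homo a_gt0)
  (@depth_penalty_merge _ a) s_enum res c_prefix.
Qed.
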